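(* Let $\alpha_1,\alpha_2,\beta_1,\beta_2,\gamma\in\widehat{\mathbb{F}_q^\times}$ with $\gamma\notin\{\alpha_1\alpha_2,\beta_1\beta_2,\alpha_1\beta_2,\alpha_2\beta_1,\alpha_1\alpha_2\beta_1\beta_2\}$ and $\varepsilon\notin\{\alpha_1,\alpha_2,\beta_1,\beta_2\}$. Then for $\lambda\in\mathbb{F}_q$, $\lambda\neq1$, $$\alpha_1\alpha_2\beta_1\overline{\gamma}(1-\lambda)\,F_3\!\left({\alpha_1,\alpha_2;\beta_1,\beta_2\atop\gamma};\lambda,\frac{\lambda}{\lambda-1}\right)=F_3\!\left({\overline{\alpha_2\beta_1}\gamma,\alpha_1\alpha_2\beta_1\beta_2\overline{\gamma};\overline{\alpha_1\alpha_2}\gamma,\alpha_2\atop\gamma};\lambda,\frac{\lambda}{\lambda-1}\right).$$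
   Context: $\mathbb{F}_q$ is a finite field with $q$ elements. $\widehat{\mathbb{F}_q^\times}$ is the group of multiplicative characters $\mathbb{F}_q^\times\to\overline{\mathbb{Q}}^\times$, $\varepsilon$ the trivial character; every character (including $\varepsilon$) is extended by $0$ at $0$; $\overline{\eta}=\eta^{-1}$, $\overline{\eta_1\eta_2}=(\eta_1\eta_2)^{-1}$; $\delta(\eta)=1$ if $\eta=\varepsilon$, else $0$. $\psi$ is a fixed non-trivial additive character. $g(\eta)=-\sum_{x\in\mathbb{F}_q^\times}\psi(x)\eta(x)$, $g^\circ(\eta)=q^{\delta(\eta)}g(\eta)$, $(\alpha)_\nu=g(\alpha\nu)/g(\alpha)$, $(\alpha)^\circ_\nu=g^\circ(\alpha\nu)/g^\circ(\alpha)$. For $x,y\in\mathbb{F}_q$, $F_3\!\left({\alpha_1,\alpha_2;\beta_1,\beta_2\atop\gamma};x,y\right)=\frac{1}{(1-q)^2}\sum_{\nu_1,\nu_2\in\widehat{\mathbb{F}_q^\times}}\frac{(\alpha_1)_{\nu_1}(\alpha_2)_{\nu_2}(\beta_1)_{\nu_1}(\beta_2)_{\nu_2}}{(\gamma)^\circ_{\nu_1\nu_2}(\varepsilon)^\circ_{\nu_1}(\varepsilon)^\circ_{\nu_2}}\nu_1(x)\nu_2(y)$. *)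

(* multiplicative characters of F_q^x are the irreducible
   (= linear, since the group is abelian) characters of the finite group
   {unit F}, valued in algC (algebraic closure of Q). *)
From HB Require Import structures.
From mathcomp Require Import all_boot all_order all_algebra all_fingroup all_solvable all_field all_character.
Set Implicit Arguments. Unset Strict Implicit. Unset Printing Implicit Defensive.
Import GRing.Theory Num.Theory.
Local Open Scope ring_scope.

Section FFChars.
Variable F : finFieldType.

Definition UG : {group {unit F}} := [set: {unit F}]%G.

Definition cext (eta : 'CF(UG)) (x : F) : algC :=
  if insub x is Some u then eta u else 0.

Definition nontriv_addchar (psi : F -> algC) : Prop :=
  psi 0 = 1 /\ (forall x y, psi (x + y) = psi x * psi y) /\ exists x, psi x != 1.

Variable psi : F -> algC.

Definition gauss (eta : 'CF(UG)) : algC := - \sum_(x : {unit F}) psi (val x) * eta x.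

Definition gauss0 (eta : 'CF(UG)) : algC :=
  if eta == 1 then #|F|%:R * gauss eta else gauss eta.

Definition poch (a nu : 'CF(UG)) : algC := gauss (a * nu) / gauss a.
Definition poch0 (a nu : 'CF(UG)) : algC := gauss0 (a * nu) / gauss0 a.

Definition appellF3 (a1 a2 b1 b2 c : 'CF(UG)) (x y : F) : algC :=
  (1 - #|F|%:R)^-2 *
  \sum_(i : Iirr UG) \sum_(j : Iirr UG)
    (poch a1 'chi_i * poch a2 'chi_j * poch b1 'chi_i * poch b2 'chi_j
     / (poch0 c ('chi_i * 'chi_j) * poch0 1 'chi_i * poch0 1 'chi_j))
    * cext 'chi_i x * cext 'chi_j y.

End FFChars.

From HB Require Import structures.
From mathcomp Require Import all_boot all_order all_algebra all_fingroup all_solvable all_field all_character.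
From mathcomp Require Import ring.
Set Implicit Arguments. Unset Strict Implicit. Unset Printing Implicit Defensive.
Import GRing.Theory Num.Theory.
Local Open Scope ring_scope.

(* Expanding the Pochhammer quotients into Gauss sums and using
   g(chi) g(conj chi) = chi(-1) q, the coefficient of x^nu1 y^nu2 in F_3 becomes a
   product of Gauss sums in nu1, in nu2, and one Gauss sum of
   conj (c nu1 nu2).  Opening the last one and summing over nu1, nu2 with the
   orthogonality relations turns F_3(a1,a2;b1,b2;c;x,y) into an explicit
   multiple of the double character sum
     S = sum_{s,t} b1(s) a1(1+xs)^-1 b2(t) a2(1+yt)^-1 w(1+s+t)^-1,  w = b1 b2 conj c.
   When y = x/(x-1), for each fixed t the involution s |-> -(1+s+t)/(1+xs)
   matches, term by term, the sum S of the right-hand side (after the symmetry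
   a1 <-> b1 of F_3) with that of the left-hand side (after a2 <-> b2), up to the
   factor (a2 conj c)(-1) (a1 a2 b1 conj c)(1-x); the Gauss-sum prefactors then
   agree by g(chi) g(conj chi) = chi(-1) q once more. *)

Lemma scale_fixed_eq0 (R : idomainType) (c s : R) : c != 1 -> s = c * s -> s = 0.
Proof.
move=> c_neq1 /eqP; rewrite -subr_eq0 -{1}[s]mul1r -mulrBl mulf_eq0 subr_eq0 eq_sym.
by rewrite (negbTE c_neq1) => /eqP.
Qed.

Section CharacterExtension.
Variable F : finFieldType.
Local Notation G := (UG F).
Local Notation lin phi := (phi \is a linear_char).

Lemma UG_abelian : abelian G.
Proof. by apply/centsP=> u _ v _; apply/val_inj; rewrite /= mulrC. Qed.

Lemma irr_UG_lin_char (i : Iirr G) : lin 'chi_i.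
Proof. exact: (char_abelianP _ UG_abelian). Qed.

Lemma in_UG (u : {unit F}) : u \in G.
Proof. by rewrite inE. Qed.

Lemma neq0_val_unit (x : F) : x != 0 -> exists u : {unit F}, x = val u.
Proof. by rewrite -unitfE => ux; exists (Sub x ux). Qed.

Lemma cext_unit (phi : 'CF(G)) (u : {unit F}) : cext phi (val u) = phi u.
Proof. by rewrite /cext valK. Qed.

Lemma cext0 (phi : 'CF(G)) : cext phi 0 = 0.
Proof. by rewrite /cext insubF // unitr0. Qed.

Lemma cext_mul (phi chi : 'CF(G)) x : cext (phi * chi) x = cext phi x * cext chi x.
Proof. by rewrite /cext; case: insubP => [u _ _|_]; rewrite ?cfunE ?mul0r. Qed.

Lemma cext_conjC (phi : 'CF(G)) x : cext (phi^*)%CF x = (cext phi x)^*.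
Proof. by rewrite /cext; case: insubP => [u _ _|_]; rewrite ?cfunE ?conjC0. Qed.

Lemma cext_cfun1 x : cext (1 : 'CF(G)) x = (x != 0)%:R.
Proof.
have [->|/neq0_val_unit[u ->]] := eqVneq x 0; first by rewrite cext0.
by rewrite cext_unit cfun1E in_UG.
Qed.

Lemma sum_units (f : F -> algC) :
  f 0 = 0 -> \sum_(u : {unit F}) f (val u) = \sum_x f x.
Proof.
move=> f0; rewrite [RHS](bigD1 0) //= f0 add0r.
rewrite (reindex_omap (val : {unit F} -> F) insub) => [|x nx]; last by rewrite insubT // unitfE.
by apply: eq_bigl => u; rewrite valK eqxx andbT -unitfE (valP u).
Qed.

Lemma sum_irr_cext x : \sum_(i : Iirr G) cext 'chi_i x = (#|F|%:R - 1) * (x == 1)%:R.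
Proof.
have [->|/neq0_val_unit[u ->]] := eqVneq x 0.
  by rewrite big1 => [|i _]; rewrite ?cext0 // eq_sym oner_eq0 mulr0.
have := second_orthogonality_relation u (group1 G).
under eq_bigr => i _ do rewrite lin_char1 ?irr_UG_lin_char // conjC1 mulr1 -cext_unit.
move=> ->; have -> : ('C_G[u])%g = G.
  by apply/setIidPl/subsetP=> v _; apply/cent1P/val_inj; rewrite /= mulrC.
rewrite card_finField_unit class1G inE -(inj_eq val_inj) /=.
have q_gt0 : (0 < #|F|)%N by apply/card_gt0P; exists 0.
by rewrite -[in #|F|%:R](prednK q_gt0) -natr1 addrK mulr_natr.
Qed.

Section LinearCharacter.
Variable phi : 'CF(G).
Hypothesis lin_phi : lin phi.

Lemma cextM x y : cext phi (x * y) = cext phi x * cext phi y.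
Proof.
have [->|/neq0_val_unit[u ->]] := eqVneq x 0; first by rewrite mul0r !cext0 mul0r.
have [->|/neq0_val_unit[v ->]] := eqVneq y 0; first by rewrite mulr0 !cext0 mulr0.
by rewrite -[val u * val v]/(val (u * v)%g) !cext_unit lin_charM ?in_UG.
Qed.

Lemma cext1 : cext phi 1 = 1.
Proof. by rewrite -[1]/(val (1%g : {unit F})) cext_unit lin_char1. Qed.

Lemma cext_neq0 x : x != 0 -> cext phi x != 0.
Proof. by move=> /neq0_val_unit[u ->]; rewrite cext_unit lin_char_neq0 ?in_UG. Qed.

Lemma cextV x : cext phi x^-1 = (cext phi x)^-1.
Proof.
have [->|/neq0_val_unit[u ->]] := eqVneq x 0; first by rewrite invr0 cext0 invr0.
by rewrite -[(val u)^-1]/(val (u^-1)%g) !cext_unit lin_charV ?in_UG.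
Qed.

Lemma cext_cfConjC x : cext (phi^*)%CF x = cext phi x^-1.
Proof.
have [->|/neq0_val_unit[u ->]] := eqVneq x 0; first by rewrite invr0 !cext0.
by rewrite cext_conjC cextV !cext_unit -lin_charV_conj ?in_UG // lin_charV ?in_UG.
Qed.

Lemma cextN1_neq0 : cext phi (-1) != 0.
Proof. by rewrite cext_neq0 // oppr_eq0 oner_eq0. Qed.

Lemma cextN1V : (cext phi (-1))^-1 = cext phi (-1).
Proof. by rewrite -cextV invrN1. Qed.

Lemma sum_cext_eq0 : phi != 1 -> \sum_x cext phi x = 0.
Proof.
move=> phi_neq1; have [u phiu_neq1] : exists u : {unit F}, phi u != 1.
  apply/existsP; apply: contraR phi_neq1 => /existsPn phi1.
  by apply/eqP/cfun_inP => v _; rewrite cfun1E in_UG; apply/eqP/negPn.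
apply: (scale_fixed_eq0 phiu_neq1).
rewrite mulr_sumr (reindex_inj (mulrI (valP u))) /=.
by apply: eq_bigr => x _; rewrite cextM cext_unit.
Qed.

End LinearCharacter.
End CharacterExtension.

Section GaussSums.
Variable F : finFieldType.
Local Notation G := (UG F).
Local Notation lin phi := (phi \is a linear_char).
Local Notation q := (#|F|%:R : algC).
Variable psi : F -> algC.
Hypothesis psi_nontriv : nontriv_addchar psi.
Local Notation g := (gauss psi).

Lemma psi0 : psi 0 = 1. Proof. by case: psi_nontriv. Qed.

Lemma psiD x y : psi (x + y) = psi x * psi y. Proof. by case: psi_nontriv => _ []. Qed.

Lemma q_neq0 : q != 0.
Proof. by rewrite pnatr_eq0 -lt0n; apply/card_gt0P; exists 0. Qed.

Lemma q_neq1 : q != 1.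
Proof. by rewrite pnatr_eq1 neq_ltn card_finNzRing_gt1 orbT. Qed.

Lemma sum_psi : \sum_x psi x = 0.
Proof.
case: psi_nontriv => _ [_ [x0 psix0_neq1]]; apply: (scale_fixed_eq0 psix0_neq1).
rewrite mulr_sumr (reindex_inj (addrI x0)) /=.
by apply: eq_bigr => x _; rewrite psiD.
Qed.

Lemma sum_psiM z : \sum_x psi (z * x) = (z == 0)%:R * q.
Proof.
have [->|z_neq0] := eqVneq z 0.
  by under eq_bigr => x _ do rewrite mul0r psi0; rewrite sumr_const mul1r.
by rewrite mul0r -[RHS]sum_psi [RHS](reindex_inj (mulfI z_neq0)).
Qed.

Lemma gaussE eta : g eta = - \sum_x psi x * cext eta x.
Proof.
rewrite /gauss -sum_units ?cext0 ?mulr0 //.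
by congr (- _); apply: eq_bigr => u _; rewrite cext_unit.
Qed.

Lemma gauss_cfun1 : g 1 = 1.
Proof.
rewrite gaussE; under eq_bigr => x _ do rewrite cext_cfun1.
rewrite (bigD1 0) //= eqxx mulr0 add0r.
under eq_bigr => x x_neq0 do rewrite x_neq0 mulr1.
by move/eqP: sum_psi; rewrite (bigD1 0) //= psi0 addrC addr_eq0 => /eqP ->; rewrite opprK.
Qed.

Lemma gauss0_cfun1 : gauss0 psi 1 = q.
Proof. by rewrite /gauss0 eqxx gauss_cfun1 mulr1. Qed.

Section LinearCharacter.
Variable eta : 'CF(G).
Hypothesis lin_eta : lin eta.

Lemma sum_psiM_cext a :
  eta != 1 -> \sum_x psi (a * x) * cext eta x = - g eta * cext eta a^-1.
Proof.
move=> eta_neq1; have [->|a_neq0] := eqVneq a 0.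
  under eq_bigr => x _ do rewrite mul0r psi0 mul1r.
  by rewrite invr0 cext0 mulr0 sum_cext_eq0.
rewrite (reindex_inj (mulfI (invr_neq0 a_neq0))) gaussE opprK mulr_suml.
by apply: eq_bigr => x _; rewrite mulrA mulfV // mul1r cextM // [_ * cext eta x]mulrC mulrA.
Qed.

Lemma gauss_mul_conjC : eta != 1 -> g eta * g (eta^*)%CF = cext eta (-1) * q.
Proof.
move=> eta_neq1.
have sum_psi_punctured w : \sum_(y | y != 0) psi ((1 + w) * y) = (w == -1)%:R * q - 1.
  move: (sum_psiM (1 + w)); rewrite (bigD1 0) //= mulr0 psi0 addrC => /(canRL (addrK 1)) ->.
  by rewrite [1 + w]addrC addr_eq0.
rewrite [g (_^*)%CF]gaussE mulrN -mulNr mulr_sumr (bigD1 0) //= cext0 !mulr0 add0r.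
rewrite (eq_bigr (fun y => \sum_w psi ((1 + w) * y) * cext eta w)) => [|y _]; last first.
  rewrite cext_cfConjC // mulrCA -sum_psiM_cext // mulr_sumr.
  by apply: eq_bigr => w _; rewrite mulrA -psiD; congr (psi _ * _); ring.
rewrite exchange_big /=.
under eq_bigr => w _ do rewrite -mulr_suml sum_psi_punctured mulrBl mul1r.
rewrite sumrB sum_cext_eq0 // subr0 (bigD1 (-1)) //= eqxx mul1r mulrC big1 ?addr0 // => w /negPf ->.
by rewrite !mul0r.
Qed.

Lemma gauss0_mul_conjC : gauss0 psi eta * g (eta^*)%CF = cext eta (-1) * q.
Proof.
rewrite /gauss0; have [->|eta_neq1] := eqVneq eta 1; last exact: gauss_mul_conjC.
by rewrite cfConjC_cfun1 gauss_cfun1 cext_cfun1 oppr_eq0 oner_eq0 !mulr1 mul1r.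
Qed.

Lemma gauss0_neq0 : gauss0 psi eta != 0.
Proof.
apply: contra_eq_neq gauss0_mul_conjC => ->.
by rewrite mul0r eq_sym mulf_neq0 ?q_neq0 ?cextN1_neq0.
Qed.

Lemma invr_gauss0 : (gauss0 psi eta)^-1 = cext eta (-1) * g (eta^*)%CF / q.
Proof.
have sign_sq : cext eta (-1) * cext eta (-1) = 1 by rewrite -cextM // mulrNN mulr1 cext1.
apply: (mulfI gauss0_neq0); rewrite mulfV ?gauss0_neq0 //.
rewrite [RHS](_ : _ = cext eta (-1) * (gauss0 psi eta * g (eta^*)%CF) / q); last by ring.
by rewrite gauss0_mul_conjC mulrA sign_sq mul1r mulfV ?q_neq0.
Qed.

End LinearCharacter.

Lemma gauss_neq0 eta : lin eta -> g eta != 0.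
Proof.
move=> lin_eta; have lin_conj : lin (eta^*)%CF by rewrite cfConjC_lin_char.
have := gauss0_mul_conjC lin_conj; rewrite cfConjCK => /contra_eq_neq; apply => ->.
by rewrite mulr0 eq_sym mulf_neq0 ?q_neq0 ?cextN1_neq0 ?cfConjC_lin_char.
Qed.

Lemma gauss_cfConjC eta : lin eta -> eta != 1 -> g (eta^*)%CF = cext eta (-1) * q / g eta.
Proof. by move=> lin_eta eta_neq1; rewrite -gauss_mul_conjC // mulrC mulKf ?gauss_neq0. Qed.

End GaussSums.

Lemma mulr_sum_sum (R : comPzRingType) (I J : finType) (A : I -> R) (B : J -> R) k :
  k * (\sum_i A i) * (\sum_j B j) = \sum_i \sum_j k * A i * B j.
Proof.
rewrite -mulrA mulr_suml mulr_sumr; apply: eq_bigr => i _.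
by rewrite !mulr_sumr; apply: eq_bigr => j _; rewrite mulrA.
Qed.

Section AppellF3CharacterSum.
Variable F : finFieldType.
Local Notation G := (UG F).
Local Notation lin phi := (phi \is a linear_char).
Local Notation q := (#|F|%:R : algC).
Variable psi : F -> algC.
Hypothesis psi_nontriv : nontriv_addchar psi.
Local Notation g := (gauss psi).

Definition irr_gauss3_sum (r p : 'CF(G)) (z : F) : algC :=
  \sum_(i : Iirr G) g (r * 'chi_i) * g (p * 'chi_i) * g (('chi_i)^*)%CF * cext 'chi_i z.

Definition appellF3_charsum (p1 p2 r1 r2 w : 'CF(G)) (x y : F) : algC :=
  \sum_s \sum_t (cext p1 s * cext r1 (1 + x * s)^-1) * (cext p2 t * cext r2 (1 + y * t)^-1)
    * cext w (1 + s + t)^-1.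

Lemma appellF3_coefE (a1 a2 b1 b2 c : 'CF(G)) (i j : Iirr G) :
  lin a1 -> lin a2 -> lin b1 -> lin b2 -> lin c ->
  poch psi a1 'chi_i * poch psi a2 'chi_j * poch psi b1 'chi_i * poch psi b2 'chi_j
     / (poch0 psi c ('chi_i * 'chi_j) * poch0 psi 1 'chi_i * poch0 psi 1 'chi_j)
  = gauss0 psi c * cext c (-1) / (g a1 * g a2 * g b1 * g b2 * q)
    * (g (a1 * 'chi_i) * g (b1 * 'chi_i) * g (('chi_i)^*)%CF)
    * (g (a2 * 'chi_j) * g (b2 * 'chi_j) * g (('chi_j)^*)%CF)
    * g ((c * ('chi_i * 'chi_j))^*)%CF.
Proof.
move=> la1 la2 lb1 lb2 lc; have li := irr_UG_lin_char i; have lj := irr_UG_lin_char j.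
rewrite /poch /poch0 !mul1r gauss0_cfun1 // !invfM !invrK.
(* chi(-1) is its own inverse: inverting one of the two signs of chi_i, chi_j
   lets [field] cancel them. *)
rewrite !invr_gauss0 ?rpredM // !cext_mul -{1}(cextN1V li) -{1}(cextN1V lj).
by field; rewrite q_neq0 ?(gauss_neq0 psi_nontriv) ?cextN1_neq0.
Qed.

Lemma gauss_cfConjC_mul3 (c n1 n2 : 'CF(G)) : lin c -> lin n1 -> lin n2 ->
  g ((c * (n1 * n2))^*)%CF
  = \sum_e (- psi e * cext c e^-1) * cext n1 e^-1 * cext n2 e^-1.
Proof.
move=> lc l1 l2; rewrite gaussE -sumrN; apply: eq_bigr => e _.
by rewrite cext_cfConjC ?rpredM // !cext_mul !mulNr !mulrA.
Qed.

Lemma appellF3_gaussE (a1 a2 b1 b2 c : 'CF(G)) x y :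
  lin a1 -> lin a2 -> lin b1 -> lin b2 -> lin c ->
  appellF3 psi a1 a2 b1 b2 c x y
  = (1 - q)^-2 * (gauss0 psi c * cext c (-1) / (g a1 * g a2 * g b1 * g b2 * q))
    * \sum_e (- psi e * cext c e^-1)
              * irr_gauss3_sum a1 b1 (x / e) * irr_gauss3_sum a2 b2 (y / e).
Proof.
move=> la1 la2 lb1 lb2 lc; rewrite /appellF3 -mulrA; congr (_ * _); apply/esym.
rewrite /irr_gauss3_sum mulr_sumr; under eq_bigr => e _ do rewrite !mulrA mulr_sum_sum.
rewrite exchange_big; apply: eq_bigr => i _; rewrite exchange_big; apply: eq_bigr => j _.
have li := irr_UG_lin_char i; have lj := irr_UG_lin_char j.
rewrite appellF3_coefE // gauss_cfConjC_mul3 // mulr_sumr !mulr_suml.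
by apply: eq_bigr => e _; rewrite !cextM //; ring.
Qed.

Lemma sum_irr_cext_div (h : F -> algC) u : u != 0 ->
  \sum_f h f * \sum_(i : Iirr G) cext 'chi_i (u / f) = (q - 1) * h u.
Proof.
move=> u_neq0; under eq_bigr => f _ do rewrite sum_irr_cext.
rewrite (bigD1 u) //= mulfV // eqxx mulr1 mulrC big1 ?addr0 // => f f_neq_u.
suff /negPf-> : u / f != 1 by rewrite !mulr0.
apply: contra f_neq_u; have [->|f_neq0] := eqVneq f 0; first by rewrite invr0 mulr0 eq_sym oner_eq0.
by move/eqP=> uf1; apply/eqP; rewrite -[u](divfK f_neq0) uf1 mul1r.
Qed.

Lemma irr_gauss3_sum_psi (r p : 'CF(G)) z : lin r -> lin p -> z != 0 ->
  irr_gauss3_sum r p z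
  = - (q - 1) * \sum_a \sum_b psi (a + b + a * b * z) * cext r a * cext p b.
Proof.
move=> lr lp z_neq0.
have expand i : g (r * 'chi_i) * g (p * 'chi_i) * g (('chi_i)^*)%CF * cext 'chi_i z
    = - \sum_a \sum_b \sum_f (psi a * cext r a * (psi b * cext p b))
                            * (psi f * cext 'chi_i (a * b * z / f)).
  have li := irr_UG_lin_char i.
  rewrite !gaussE mulrNN mulrN mulNr; congr (- _).
  rewrite -mulrA 2!mulr_suml; apply: eq_bigr => a _.
  rewrite mulr_sumr mulr_suml; apply: eq_bigr => b _.
  rewrite mulr_suml mulr_sumr.
  by apply: eq_bigr => f _; rewrite cext_cfConjC // !cext_mul !cextM //; ring.
rewrite /irr_gauss3_sum (eq_bigr _ (fun i _ => expand i)) sumrN mulNr; congr (- _).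
rewrite exchange_big mulr_sumr; apply: eq_bigr => a _.
rewrite exchange_big mulr_sumr; apply: eq_bigr => b _.
rewrite exchange_big /=; under eq_bigr => f _ do rewrite -2!mulr_sumr mulrA.
have [->|a_neq0] := eqVneq a 0.
  by rewrite !cext0 !(mulr0, mul0r) big1 // => f _; rewrite !(mulr0, mul0r).
have [->|b_neq0] := eqVneq b 0.
  by rewrite !cext0 !(mulr0, mul0r) big1 // => f _; rewrite !(mulr0, mul0r).
rewrite sum_irr_cext_div ?mulf_neq0 // !(psiD psi_nontriv); ring.
Qed.

Lemma irr_gauss3_sumE (r p : 'CF(G)) x e :
  lin r -> lin p -> r != 1 -> x != 0 -> e != 0 ->
  irr_gauss3_sum r p (x / e)
  = (q - 1) * g r * cext p e * \sum_s psi (e * s) * (cext p s * cext r (1 + x * s)^-1).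
Proof.
move=> lr lp r_neq1 x_neq0 e_neq0.
rewrite irr_gauss3_sum_psi ?mulf_neq0 ?invr_neq0 // exchange_big /=.
rewrite (reindex_inj (mulfI e_neq0)) /= !mulr_sumr; apply: eq_bigr => s _.
have shift a : a + e * s + a * (e * s) * (x / e) = e * s + (1 + x * s) * a by field.
rewrite (eq_bigr (fun a => psi (e * s) * cext p (e * s) * (psi ((1 + x * s) * a) * cext r a)));
  last by move=> a _; rewrite shift (psiD psi_nontriv); ring.
by rewrite -mulr_sumr sum_psiM_cext // cextM //; ring.
Qed.

Lemma sum_psi_cext_mul (w : 'CF(G)) (X Y : F -> algC) : lin w -> w != 1 ->
  \sum_e (psi e * cext w e) * (\sum_s psi (e * s) * X s) * (\sum_t psi (e * t) * Y t)
  = - g w * \sum_s \sum_t X s * Y t * cext w (1 + s + t)^-1.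
Proof.
move=> lw w_neq1; under eq_bigr => e _ do rewrite mulr_sum_sum.
rewrite exchange_big mulr_sumr; apply: eq_bigr => s _.
rewrite exchange_big mulr_sumr; apply: eq_bigr => t _.
rewrite (eq_bigr (fun e => X s * Y t * (psi ((1 + s + t) * e) * cext w e))) => [|e _]; last first.
  by rewrite [(1 + s + t) * e]mulrC !mulrDr mulr1 !(psiD psi_nontriv); ring.
by rewrite -mulr_sumr sum_psiM_cext //; ring.
Qed.

Lemma appellF3_charsumE (a1 a2 b1 b2 c : 'CF(G)) x y :
  lin a1 -> lin a2 -> lin b1 -> lin b2 -> lin c ->
  a1 != 1 -> a2 != 1 -> b1 * b2 * (c^*)%CF != 1 -> x != 0 -> y != 0 ->
  appellF3 psi a1 a2 b1 b2 c x y
  = gauss0 psi c * cext c (-1) * g (b1 * b2 * (c^*)%CF) / (q * g b1 * g b2)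
    * appellF3_charsum b1 b2 a1 a2 (b1 * b2 * (c^*)%CF) x y.
Proof.
move=> la1 la2 lb1 lb2 lc a1_neq1 a2_neq1 w_neq1 x_neq0 y_neq0.
set w := b1 * b2 * (c^*)%CF; have lw : lin w by rewrite !rpredM ?cfConjC_lin_char.
have term e : (- psi e * cext c e^-1) * irr_gauss3_sum a1 b1 (x / e) * irr_gauss3_sum a2 b2 (y / e)
    = (q - 1) ^+ 2 * g a1 * g a2 * - ((psi e * cext w e)
       * (\sum_s psi (e * s) * (cext b1 s * cext a1 (1 + x * s)^-1))
       * (\sum_t psi (e * t) * (cext b2 t * cext a2 (1 + y * t)^-1))).
  have [->|e_neq0] := eqVneq e 0; first by rewrite invr0 !cext0 !(mulr0, mul0r) oppr0 mulr0.
  by rewrite !irr_gauss3_sumE // /w !cext_mul cext_cfConjC //; ring.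
rewrite appellF3_gaussE // (eq_bigr _ (fun e _ => term e)) -mulr_sumr sumrN.
rewrite sum_psi_cext_mul // /appellF3_charsum.
have q1_neq0 : 1 - q != 0 by rewrite subr_eq0 eq_sym q_neq1.
by field; rewrite q_neq0 q1_neq0 ?(gauss_neq0 psi_nontriv).
Qed.

End AppellF3CharacterSum.

Section CremonaTransformation.
Variable F : finFieldType.
Local Notation G := (UG F).
Local Notation lin phi := (phi \is a linear_char).

(* The pole s = -1/x is sent to itself, making the map a total involution of F. *)
Definition cremona (x t s : F) : F :=
  if 1 + x * s == 0 then s else - (1 + s + t) / (1 + x * s).

Lemma cremona_involutive x t : x - 1 + x * t != 0 -> involutive (cremona x t).
Proof.
move=> E_neq0 s; rewrite /cremona; have [D0|D_neq0 /=] := eqVneq (1 + x * s) 0; first by rewrite D0 eqxx.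
have -> : 1 + x * (- (1 + s + t) / (1 + x * s)) = - (x - 1 + x * t) / (1 + x * s) by field.
rewrite mulf_eq0 oppr_eq0 invr_eq0 (negbTE E_neq0) (negbTE D_neq0) /=.
by field; rewrite D_neq0 oppr_eq0 E_neq0.
Qed.

Variables A1 A2 B1 B2 C : 'CF(G).
Hypotheses (lA1 : lin A1) (lA2 : lin A2) (lB1 : lin B1) (lB2 : lin B2) (lC : lin C).

Lemma cremona_term x s t :
  x - 1 != 0 -> x - 1 + x * t != 0 -> 1 + x * s != 0 ->
  let s' := - (1 + s + t) / (1 + x * s) in
  (cext (((A2 * B1)^*)%CF * C) s' * cext (((A1 * A2)^*)%CF * C) (1 + x * s')^-1)
    * (cext A2 t * cext (A1 * A2 * B1 * B2 * (C^*)%CF) (1 + x / (x - 1) * t)^-1)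
    * cext (B1^*)%CF (1 + s' + t)^-1
  = cext (A2 * (C^*)%CF) (-1) * cext (A1 * A2 * B1 * (C^*)%CF) (1 - x)
    * ((cext B1 s * cext A1 (1 + x * s)^-1) * (cext A2 t * cext B2 (1 + x / (x - 1) * t)^-1)
       * cext (B1 * A2 * (C^*)%CF) (1 + s + t)^-1).
Proof.
move=> x1_neq0 E_neq0 D_neq0 s'.
set D := 1 + x * s; set E := x - 1 + x * t; set P := 1 + s + t.
have -> : s' = -1 * P / D by rewrite /s' mulN1r.
have -> : 1 + x * (-1 * P / D) = -1 * E / D by rewrite /P /E /D; field.
have -> : 1 + x / (x - 1) * t = E / (x - 1) by rewrite /E; field.
have -> : 1 + -1 * P / D + t = s * E / D by rewrite /P /E /D; field.
have -> : 1 - x = -1 * (x - 1) by ring.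
have [->|s_neq0] := eqVneq s 0; first by rewrite !(mul0r, cext0, invr0, mulr0).
have [->|t_neq0] := eqVneq t 0; first by rewrite !(cext0, invr0, mulr0, mul0r).
have [->|P_neq0] := eqVneq P 0; first by rewrite !(mulr0, cext0, invr0, mul0r, oppr0).
rewrite !cext_mul !cext_cfConjC ?rpredM // !cext_mul !(cextM, cextV) //.
(* Normalizing every inverse sign chi(-1)^-1 to chi(-1) makes the signs match. *)
rewrite !invfM !invrK !(cextN1V lA1, cextN1V lA2, cextN1V lB1, cextN1V lC).
field; repeat (apply/andP; split); apply: cext_neq0; rewrite ?oppr_eq0 ?oner_eq0 //.
Qed.

Lemma appellF3_charsum_cremona x : x - 1 != 0 ->
  appellF3_charsum (((A2 * B1)^*)%CF * C) A2 (((A1 * A2)^*)%CF * C)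
    (A1 * A2 * B1 * B2 * (C^*)%CF) (B1^*)%CF x (x / (x - 1))
  = cext (A2 * (C^*)%CF) (-1) * cext (A1 * A2 * B1 * (C^*)%CF) (1 - x)
    * appellF3_charsum B1 A2 A1 B2 (B1 * A2 * (C^*)%CF) x (x / (x - 1)).
Proof.
move=> x1_neq0; rewrite /appellF3_charsum exchange_big [in RHS]exchange_big mulr_sumr /=.
apply: eq_bigr => t _; have [E0|E_neq0] := eqVneq (x - 1 + x * t) 0.
  have -> : 1 + x / (x - 1) * t = 0 by rewrite -[RHS](mul0r (x - 1)^-1) -E0; field.
  by rewrite mulr_sumr !big1 // => s _; rewrite !(invr0, cext0, mulr0, mul0r).
rewrite (reindex_inj (inv_inj (cremona_involutive E_neq0))) mulr_sumr; apply: eq_bigr => s _.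
rewrite /cremona; have [D0|D_neq0] := eqVneq (1 + x * s) 0.
  by rewrite D0 !(invr0, cext0, mulr0, mul0r).
exact: cremona_term.
Qed.

End CremonaTransformation.

Section AppellF3Symmetries.
Variable F : finFieldType.
Local Notation G := (UG F).
Variable psi : F -> algC.

Lemma appellF3_swap_a1b1 (a1 a2 b1 b2 c : 'CF(G)) x y :
  appellF3 psi a1 a2 b1 b2 c x y = appellF3 psi b1 a2 a1 b2 c x y.
Proof.
rewrite /appellF3; congr (_ * _); apply: eq_bigr => i _; apply: eq_bigr => j _.
by congr (_ / _ * _ * _); ring.
Qed.

Lemma appellF3_swap_a2b2 (a1 a2 b1 b2 c : 'CF(G)) x y :
  appellF3 psi a1 a2 b1 b2 c x y = appellF3 psi a1 b2 b1 a2 c x y.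
Proof.
rewrite /appellF3; congr (_ * _); apply: eq_bigr => i _; apply: eq_bigr => j _.
by congr (_ / _ * _ * _); ring.
Qed.

Lemma appellF3_x0 (a1 a2 b1 b2 c : 'CF(G)) y : appellF3 psi a1 a2 b1 b2 c 0 y = 0.
Proof.
rewrite /appellF3 big1 ?mulr0 // => i _; rewrite big1 // => j _.
by rewrite cext0 mulr0 mul0r.
Qed.

End AppellF3Symmetries.

Lemma mul_cfConjC_eq1 (gT : finGroupType) (G : {group gT}) (X Y : 'CF(G)) :
  X \is a linear_char -> (Y * (X^*)%CF == 1) = (Y == X).
Proof.
move=> lX; apply/eqP/eqP => [YX1|->]; last exact: mul_conjC_lin_char.
by rewrite -[Y]mulr1 -(mul_conjC_lin_char lX) mulrCA YX1 mulr1.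
Qed.

Theorem corollary3p15 (F : finFieldType) (psi : F -> algC)
    (hpsi : nontriv_addchar psi)
    (a1 a2 b1 b2 c : Iirr (UG F)) (lam : F) :
  let A1 := 'chi_a1 in let A2 := 'chi_a2 in
  let B1 := 'chi_b1 in let B2 := 'chi_b2 in let C := 'chi_c in
  C != A1 * A2 -> C != B1 * B2 -> C != A1 * B2 -> C != A2 * B1 ->
  C != A1 * A2 * B1 * B2 ->
  A1 != 1 -> A2 != 1 -> B1 != 1 -> B2 != 1 ->
  lam != 1 ->
  cext (A1 * A2 * B1 * (C^*)%CF) (1 - lam)
    * appellF3 psi A1 A2 B1 B2 C lam (lam / (lam - 1))
  = appellF3 psi ((A2 * B1)^*%CF * C) (A1 * A2 * B1 * B2 * (C^*)%CF)
           ((A1 * A2)^*%CF * C) A2 C lam (lam / (lam - 1)).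
Proof.
move=> A1 A2 B1 B2 C C_neqA1A2 _ _ C_neqA2B1 C_neq_all A1_neq1 _ B1_neq1 B2_neq1 lam_neq1.
have lA1 := irr_UG_lin_char a1; have lA2 := irr_UG_lin_char a2.
have lB1 := irr_UG_lin_char b1; have lB2 := irr_UG_lin_char b2; have lC := irr_UG_lin_char c.
have [->|lam_neq0] := eqVneq lam 0; first by rewrite !appellF3_x0 mulr0.
have lam1_neq0 : lam - 1 != 0 by rewrite subr_eq0.
have y_neq0 : lam / (lam - 1) != 0 by rewrite mulf_neq0 ?invr_neq0.
set w := B1 * A2 * (C^*)%CF.
have lw : w \is a linear_char by rewrite !rpredM ?cfConjC_lin_char.
have w_neq1 : w != 1 by rewrite mul_cfConjC_eq1 // eq_sym mulrC.
have conj_w : ((A2 * B1)^*)%CF * C = (w^*)%CF by rewrite !rmorphM /= cfConjCK; ring.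
have w_rhs : ((A2 * B1)^*)%CF * C * A2 * (C^*)%CF = (B1^*)%CF.
  rewrite rmorphM /= (_ : _ * _ = (B1^*)%CF * (A2 * (A2^*)%CF) * (C * (C^*)%CF)); last by ring.
  by rewrite !mul_conjC_lin_char // !mulr1.
rewrite appellF3_swap_a2b2 appellF3_charsumE // appellF3_swap_a1b1 appellF3_charsumE //; first last.
- by rewrite w_rhs cfAut_eq1.
- by rewrite mul_cfConjC_eq1 // eq_sym.
- by rewrite mulrC mul_cfConjC_eq1 ?rpredM.
- by rewrite rpredM ?cfConjC_lin_char ?rpredM.
- by rewrite !rpredM ?cfConjC_lin_char.
- by rewrite rpredM ?cfConjC_lin_char ?rpredM.
rewrite w_rhs appellF3_charsum_cremona // conj_w !gauss_cfConjC ?cfAut_eq1 //.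
rewrite !cext_mul !cext_cfConjC // invrN1.
by field; rewrite q_neq0 ?(gauss_neq0 hpsi) ?cextN1_neq0.
Qed.
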